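(* Let $0<a<1<b$, $\varphi(y)=\max\{y^a,y^b\}$ and $\varphi^{-1}(y)=\min\{y^{1/a},y^{1/b}\}$ for $y>0$, let $c,d>0$ with $cd\le1$, and $g(x)=xF(c,d;c+d;x)$ for $x\in(0,1)$. Then for every $x\in(0,1)$, $$g(x)\le b\,\varphi\!\left(g\!\left(\frac{\varphi^{-1}(x/(1-x))}{1+\varphi^{-1}(x/(1-x))}\right)\right).$$
   Context: $F(a,b;c;x)$ is the Gaussian hypergeometric function $\sum_{n\ge0}\frac{(a)_n(b)_n}{(c)_n}\frac{x^n}{n!}$ ($|x|<1$), with $(a)_n=a(a+1)\cdots(a+n-1)$, $(a)_0=1$. The exponents $a,b$ are distinct from the hypergeometric parameters $c,d$. *)

From Stdlib Require Import Reals Arith ClassicalEpsilon.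
Open Scope R_scope.

Fixpoint poch (a : R) (n : nat) : R :=
  match n with
  | O => 1
  | S k => poch a k * (a + INR k)
  end.

Definition hyp_term (a b c x : R) (n : nat) : R :=
  poch a n * poch b n / poch c n * x ^ n / INR (fact n).

(* F(a,b;c;x) = sum_{n>=0} hyp_term n  (the series converges for |x|<1,
   where it is used); chosen via classical epsilon as the limit. *)
Definition hypF (a b c x : R) : R :=
  epsilon (inhabits 0) (fun l => infinite_sum (hyp_term a b c x) l).

Definition gfun (c d x : R) : R := x * hypF c d (c + d) x.

Definition phi (a b y : R) : R := Rmax (Rpower y a) (Rpower y b).
Definition phiinv (a b y : R) : R := Rmin (Rpower y (1 / a)) (Rpower y (1 / b)).

(* Theorem: for 0 < a < 1 < b, c, d > 0 with c d <= 1 and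
   g(x) = x F(c,d;c+d;x),
     g(x) <= b phi(g(y)),   where t = x/(1-x), s = phi^{-1}(t), y = s/(1+s).

   Write F(z) = sum_n A_n z^n.  When c d <= 1 the coefficients satisfy
   A_0 = 1, A_n > 0, and both A_n and (n+1) A_n are nonincreasing.  A
   Chebyshev-type rearrangement inequality for power series (if alpha_n/beta_n
   is nonincreasing and 0 < y <= x then A(x) B(y) <= A(y) B(x)) compares F with
   the geometric series (beta_n = 1) and with -ln(1-z)/z (beta_n = 1/(n+1)):
     F(x)(1-x) <= F(y)(1-y)   and   g(x) ln(1+s) <= g(y) ln(1+t).
   If t >= 1 then s = t^(1/b) >= 1, ln(1+t) <= b ln(1+s) and the second
   inequality gives g(x) <= b g(y) <= b phi(g(y)).  If t < 1 then
   s = t^(1/a) <= t, and the first inequality together with F(y) <= 1+s gives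
   g(x) <= g(y)^a <= phi(g(y)). *)
From Stdlib Require Import Reals Arith Lra Lia ClassicalEpsilon.
From Coquelicot Require Import Coquelicot.
Open Scope R_scope.

Lemma infinite_sum_ext (f g : nat -> R) (l : R) :
  (forall n, f n = g n) -> infinite_sum f l -> infinite_sum g l.
Proof.
  intros E H. apply (Un_cv_ext (sum_f_R0 f)); [|exact H].
  intros n. apply sum_eq. intros i _. apply E.
Qed.

Lemma pow_cross_nonneg (x y : R) (m n : nat) :
  0 < y <= x -> (m <= n)%nat -> y ^ n * x ^ m <= x ^ n * y ^ m.
Proof.
  intros Hxy Hmn.
  replace n with (m + (n - m))%nat by lia. rewrite !pow_add.
  assert (y ^ (n - m) <= x ^ (n - m)) by (apply pow_incr; lra).
  assert (0 <= x ^ m * y ^ m) by (apply Rmult_le_pos; apply pow_le; lra).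
  nra.
Qed.

Lemma sum_cross_expand (al be : nat -> R) (x y p q u v : R) (N : nat) :
  sum_f_R0 (fun m => (p * be m - q * al m) * (u * y ^ m - v * x ^ m)) N =
  p * u * sum_f_R0 (fun m => be m * y ^ m) N - p * v * sum_f_R0 (fun m => be m * x ^ m) N
  - q * u * sum_f_R0 (fun m => al m * y ^ m) N + q * v * sum_f_R0 (fun m => al m * x ^ m) N.
Proof. induction N as [|N IH]; simpl; [ring|]. rewrite IH. ring. Qed.

Lemma sum_f_R0_nonneg (f : nat -> R) (N : nat) :
  (forall n, (n <= N)%nat -> 0 <= f n) -> 0 <= sum_f_R0 f N.
Proof.
  induction N as [|N IH]; intros Hf; simpl.
  - apply Hf; lia.
  - assert (0 <= sum_f_R0 f N) by (apply IH; intros; apply Hf; lia).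
    assert (0 <= f (S N)) by (apply Hf; lia). lra.
Qed.

(* Rearrangement inequality for partial sums of power series whose coefficient
   ratio al_n / be_n is nonincreasing: passing from N to N+1 adds the cross
   terms (al_m be_(N+1) - al_(N+1) be_m)(x^(N+1) y^m - y^(N+1) x^m) >= 0. *)
Lemma ratio_partial_sums (al be : nat -> R) (x y : R) :
  0 < y <= x ->
  (forall m n, (m <= n)%nat -> al n * be m <= al m * be n) ->
  forall N,
  sum_f_R0 (fun n => al n * x ^ n) N * sum_f_R0 (fun n => be n * y ^ n) N <=
  sum_f_R0 (fun n => al n * y ^ n) N * sum_f_R0 (fun n => be n * x ^ n) N.
Proof.
  intros Hxy Hratio N. induction N as [|N IH]; simpl sum_f_R0; [lra|].
  assert (Hcross : 0 <= sum_f_R0 (fun m => (be (S N) * al m - al (S N) * be m) *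
                          (x ^ S N * y ^ m - y ^ S N * x ^ m)) N).
  { apply sum_f_R0_nonneg. intros m Hm.
    assert (Hc := Hratio m (S N) ltac:(lia)).
    assert (Hp := pow_cross_nonneg x y m (S N) Hxy ltac:(lia)).
    apply Rmult_le_pos; lra. }
  rewrite sum_cross_expand in Hcross.
  change (x * x ^ N) with (x ^ S N). change (y * y ^ N) with (y ^ S N).
  lra.
Qed.

Lemma ratio_series (al be : nat -> R) (x y Ax Ay Bx By : R) :
  0 < y <= x ->
  (forall m n, (m <= n)%nat -> al n * be m <= al m * be n) ->
  infinite_sum (fun n => al n * x ^ n) Ax ->
  infinite_sum (fun n => al n * y ^ n) Ay ->
  infinite_sum (fun n => be n * x ^ n) Bx ->
  infinite_sum (fun n => be n * y ^ n) By ->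
  Ax * By <= Ay * Bx.
Proof.
  intros Hxy Hratio HAx HAy HBx HBy.
  eapply Rle_cv_lim.
  - apply (ratio_partial_sums al be x y Hxy Hratio).
  - apply CV_mult; assumption.
  - apply CV_mult; assumption.
Qed.

Lemma CV_radius_ones : CV_radius (fun _ => 1) = 1.
Proof.
  rewrite (CV_radius_finite_DAlembert _ 1).
  - now rewrite Rinv_1.
  - intros; lra.
  - lra.
  - eapply is_lim_seq_ext; [|apply is_lim_seq_const].
    intros n; simpl. rewrite Rdiv_1_r, Rabs_R1. reflexivity.
Qed.

(* -ln(1-z) = sum_n z^(n+1)/(n+1): integrate the geometric series termwise. *)
Lemma log_pseries (z : R) : 0 <= z < 1 ->
  is_pseries (PS_Int (fun _ => 1)) z (- ln (1 - z)).
Proof.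
  intros Hz.
  assert (Hrad : Rbar_lt (Rabs z) (CV_radius (fun _ => 1))).
  { rewrite CV_radius_ones. simpl. rewrite Rabs_pos_eq; lra. }
  replace (- ln (1 - z)) with (RInt (PSeries (fun _ => 1)) 0 z);
    [exact (is_pseries_RInt _ z Hrad)|].
  apply is_RInt_unique.
  apply is_RInt_ext with (f := fun t => / (1 - t)).
  { intros t Ht. rewrite Rmin_left in Ht by lra. rewrite Rmax_right in Ht by lra.
    symmetry. apply is_pseries_unique. apply is_pseries_R.
    eapply is_series_ext; [|apply is_series_geom].
    - intros n; simpl. ring.
    - rewrite Rabs_pos_eq; lra. }
  replace (- ln (1 - z)) with (minus (- ln (1 - z)) (- ln (1 - 0))).
  2:{ rewrite Rminus_0_r, ln_1. unfold minus, plus, opp; simpl. ring. }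
  apply (is_RInt_derive (fun t => - ln (1 - t))).
  - intros t Ht. rewrite Rmin_left in Ht by lra. rewrite Rmax_right in Ht by lra.
    auto_derive; [lra|field; lra].
  - intros t Ht. rewrite Rmin_left in Ht by lra. rewrite Rmax_right in Ht by lra.
    apply (ex_derive_continuous (V := R_NormedModule) (fun t => / (1 - t))).
    auto_derive. lra.
Qed.

Lemma log_series (z : R) : 0 < z < 1 ->
  infinite_sum (fun n => / INR (S n) * z ^ n) (- ln (1 - z) / z).
Proof.
  intros Hz.
  assert (H := is_pseries_decr_1 _ z (/ z) _ ltac:(change (/ z * z = 1); field; lra)
                 (log_pseries z ltac:(lra))).
  apply is_pseries_R, is_series_Reals in H.
  replace (- ln (1 - z) / z) with (/ z * (- ln (1 - z) + - 0)) by (field; lra).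
  eapply infinite_sum_ext; [|exact H].
  intros n. unfold PS_decr_1, PS_Int. simpl. unfold Rdiv. now rewrite Rmult_1_l.
Qed.

Definition hcoef (c d : R) (n : nat) : R :=
  poch c n * poch d n / poch (c + d) n / INR (fact n).

Lemma poch_pos (r : R) (n : nat) : 0 < r -> 0 < poch r n.
Proof.
  intros Hr; induction n as [|n IH]; simpl; [lra|].
  apply Rmult_lt_0_compat; [exact IH|]. pose proof (pos_INR n). lra.
Qed.

Lemma INR_fact_pos (n : nat) : 0 < INR (fact n).
Proof. apply lt_0_INR, lt_O_fact. Qed.

Lemma hcoef_pos (c d : R) (n : nat) : 0 < c -> 0 < d -> 0 < hcoef c d n.
Proof.
  intros Hc Hd. unfold hcoef.
  pose proof (poch_pos c n Hc). pose proof (poch_pos d n Hd).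
  pose proof (poch_pos (c + d) n ltac:(lra)). pose proof (INR_fact_pos n).
  repeat apply Rdiv_lt_0_compat; auto. apply Rmult_lt_0_compat; auto.
Qed.

Lemma hcoef_0 (c d : R) : hcoef c d 0 = 1.
Proof. unfold hcoef; simpl. field. Qed.

Lemma hcoef_S (c d : R) (n : nat) : 0 < c -> 0 < d ->
  hcoef c d (S n) = hcoef c d n * ((c + INR n) * (d + INR n) / ((c + d + INR n) * (INR n + 1))).
Proof.
  intros Hc Hd. unfold hcoef. simpl poch.
  change (fact (S n)) with (S n * fact n)%nat. rewrite mult_INR, S_INR.
  pose proof (poch_pos (c + d) n ltac:(lra)). pose proof (INR_fact_pos n).
  pose proof (pos_INR n).
  field. repeat split; lra.
Qed.

(* cd <= 1 forces c + d >= 2 sqrt(cd) >= 2cd. *)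
Lemma sum_ge_twice_prod (c d : R) : 0 < c -> 0 < d -> c * d <= 1 -> 2 * (c * d) <= c + d.
Proof.
  intros Hc Hd Hcd.
  assert (Hpos : 0 < c * d) by nra.
  assert (Hsq : (c * d) * (c * d) <= c * d) by nra.
  assert (Hamgm : 4 * (c * d) <= (c + d) * (c + d)) by (pose proof (Rle_0_sqr (c - d)); unfold Rsqr in *; nra).
  nra.
Qed.

(* The key coefficient inequality (n+2) A_(n+1) <= (n+1) A_n, which amounts to
   (n+2)(c+n)(d+n) <= (n+1)^2 (c+d+n), i.e. n(1-cd) + (c+d-2cd) >= 0. *)
Lemma hcoef_weighted_step (c d : R) (n : nat) : 0 < c -> 0 < d -> c * d <= 1 ->
  INR (S (S n)) * hcoef c d (S n) <= INR (S n) * hcoef c d n.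
Proof.
  intros Hc Hd Hcd. rewrite hcoef_S, !S_INR by auto.
  pose proof (hcoef_pos c d n Hc Hd) as HA. pose proof (pos_INR n) as Hn.
  pose proof (sum_ge_twice_prod c d Hc Hd Hcd).
  set (k := INR n) in *. set (A := hcoef c d n) in *.
  assert (Hkey : (k + 1 + 1) * ((c + k) * (d + k)) <= (k + 1) * ((c + d + k) * (k + 1))).
  { assert (0 <= k * (1 - c * d)) by (apply Rmult_le_pos; lra).
    assert (E : (k + 1) * ((c + d + k) * (k + 1)) - (k + 1 + 1) * ((c + k) * (d + k))
                = k * (1 - c * d) + (c + d - 2 * (c * d))) by ring.
    lra. }
  apply Rmult_le_reg_r with ((c + d + k) * (k + 1)); [nra|].
  replace ((k + 1 + 1) * (A * ((c + k) * (d + k) / ((c + d + k) * (k + 1)))) * ((c + d + k) * (k + 1)))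
    with (A * ((k + 1 + 1) * ((c + k) * (d + k)))) by (field; nra).
  replace ((k + 1) * A * ((c + d + k) * (k + 1))) with (A * ((k + 1) * ((c + d + k) * (k + 1)))) by ring.
  apply Rmult_le_compat_l; lra.
Qed.

Lemma hcoef_weighted_decreasing (c d : R) : 0 < c -> 0 < d -> c * d <= 1 ->
  Un_decreasing (fun n => INR (S n) * hcoef c d n).
Proof. intros Hc Hd Hcd n. now apply hcoef_weighted_step. Qed.

Lemma hcoef_decreasing (c d : R) : 0 < c -> 0 < d -> c * d <= 1 ->
  Un_decreasing (hcoef c d).
Proof.
  intros Hc Hd Hcd n.
  pose proof (hcoef_weighted_step c d n Hc Hd Hcd) as Hw.
  pose proof (hcoef_pos c d (S n) Hc Hd). rewrite !S_INR in Hw.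
  pose proof (pos_INR n). nra.
Qed.

Lemma hcoef_le_1 (c d : R) (n : nat) : 0 < c -> 0 < d -> c * d <= 1 -> hcoef c d n <= 1.
Proof.
  intros Hc Hd Hcd. rewrite <- (hcoef_0 c d).
  apply decreasing_prop; [apply hcoef_decreasing; auto | lia].
Qed.

(* For 0 < z < 1 the hypergeometric series converges (it is dominated by the
   geometric series) and hypF is its sum. *)
Lemma hypF_sum (c d z : R) : 0 < c -> 0 < d -> c * d <= 1 -> 0 < z < 1 ->
  infinite_sum (fun n => hcoef c d n * z ^ n) (hypF c d (c + d) z).
Proof.
  intros Hc Hd Hcd Hz.
  assert (Hterm : forall n, hyp_term c d (c + d) z n = hcoef c d n * z ^ n).
  { intros n. unfold hyp_term, hcoef. pose proof (INR_fact_pos n).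
    pose proof (poch_pos (c + d) n ltac:(lra)). field. split; lra. }
  assert (Hex : ex_series (fun n => hcoef c d n * z ^ n)).
  { apply (ex_series_le (V := R_CompleteNormedModule)) with (b := fun n => z ^ n).
    - intros n. change (Rabs (hcoef c d n * z ^ n) <= z ^ n).
      pose proof (hcoef_pos c d n Hc Hd). pose proof (hcoef_le_1 c d n Hc Hd Hcd).
      assert (0 < z ^ n) by (apply pow_lt; lra).
      rewrite Rabs_pos_eq by nra. nra.
    - apply ex_series_geom. rewrite Rabs_pos_eq; lra. }
  apply Series_correct, is_series_Reals in Hex.
  assert (Hhyp : infinite_sum (hyp_term c d (c + d) z) (hypF c d (c + d) z)).
  { unfold hypF. apply epsilon_spec. exists (Series (fun n => hcoef c d n * z ^ n)).
    eapply infinite_sum_ext; [|exact Hex]. intros n. now rewrite Hterm. }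
  eapply infinite_sum_ext; [|exact Hhyp]. exact Hterm.
Qed.

(* 1 = A_0 <= F(z) <= sum_n z^n = 1/(1-z). *)
Lemma hypF_bounds (c d z : R) : 0 < c -> 0 < d -> c * d <= 1 -> 0 < z < 1 ->
  1 <= hypF c d (c + d) z <= / (1 - z).
Proof.
  intros Hc Hd Hcd Hz. pose proof (hypF_sum c d z Hc Hd Hcd Hz) as Hsum. split.
  - replace 1 with (sum_f_R0 (fun n => hcoef c d n * z ^ n) 0) by (simpl; rewrite hcoef_0; ring).
    apply (growing_ineq (sum_f_R0 (fun n => hcoef c d n * z ^ n))); [|exact Hsum].
    intros n. simpl. pose proof (hcoef_pos c d (S n) Hc Hd).
    assert (0 < z * z ^ n) by (apply Rmult_lt_0_compat; [lra|apply pow_lt; lra]). nra.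
  - apply (Rle_cv_lim (Un := sum_f_R0 (fun n => hcoef c d n * z ^ n))
                       (Vn := sum_f_R0 (fun n => 1 * z ^ n))).
    + intros N. apply sum_Rle. intros n _. apply Rmult_le_compat_r.
      * apply pow_le; lra.
      * apply hcoef_le_1; auto.
    + exact Hsum.
    + apply GP_infinite. rewrite Rabs_pos_eq; lra.
Qed.

Lemma gfun_pos (c d z : R) : 0 < c -> 0 < d -> c * d <= 1 -> 0 < z < 1 -> 0 < gfun c d z.
Proof.
  intros Hc Hd Hcd Hz. unfold gfun.
  pose proof (hypF_bounds c d z Hc Hd Hcd Hz). nra.
Qed.

(* Comparison with the geometric series (A_n nonincreasing):
   z |-> (1-z) F(z) is nonincreasing on (0,1). *)
Lemma hypF_geom_ratio (c d x y : R) : 0 < c -> 0 < d -> c * d <= 1 -> 0 < y <= x -> x < 1 ->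
  hypF c d (c + d) x * (1 - x) <= hypF c d (c + d) y * (1 - y).
Proof.
  intros Hc Hd Hcd Hy Hx.
  assert (H : hypF c d (c + d) x * / (1 - y) <= hypF c d (c + d) y * / (1 - x)).
  { apply (ratio_series (hcoef c d) (fun _ => 1) x y); auto.
    - intros m n Hmn. pose proof (decreasing_prop _ m n (hcoef_decreasing c d Hc Hd Hcd) Hmn).
      lra.
    - apply hypF_sum; auto; lra.
    - apply hypF_sum; auto; lra.
    - apply GP_infinite. rewrite Rabs_pos_eq; lra.
    - apply GP_infinite. rewrite Rabs_pos_eq; lra. }
  apply Rmult_le_compat_r with (r := (1 - x) * (1 - y)) in H; [|nra].
  replace (hypF c d (c + d) x * / (1 - y) * ((1 - x) * (1 - y)))
    with (hypF c d (c + d) x * (1 - x)) in H by (field; lra).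
  replace (hypF c d (c + d) y * / (1 - x) * ((1 - x) * (1 - y)))
    with (hypF c d (c + d) y * (1 - y)) in H by (field; lra).
  exact H.
Qed.

(* Comparison with the logarithmic series ((n+1) A_n nonincreasing):
   z |-> g(z) / (-ln(1-z)) is nonincreasing on (0,1). *)
Lemma gfun_log_ratio (c d x y : R) : 0 < c -> 0 < d -> c * d <= 1 -> 0 < y <= x -> x < 1 ->
  gfun c d x * (- ln (1 - y)) <= gfun c d y * (- ln (1 - x)).
Proof.
  intros Hc Hd Hcd Hy Hx.
  assert (H : hypF c d (c + d) x * (- ln (1 - y) / y)
              <= hypF c d (c + d) y * (- ln (1 - x) / x)).
  { apply (ratio_series (hcoef c d) (fun n => / INR (S n)) x y); auto.
    - intros m n Hmn.
      pose proof (decreasing_prop _ m n (hcoef_weighted_decreasing c d Hc Hd Hcd) Hmn).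
      assert (0 < INR (S m)) by (apply lt_0_INR; lia).
      assert (0 < INR (S n)) by (apply lt_0_INR; lia).
      apply Rmult_le_reg_r with (INR (S m) * INR (S n)); [nra|].
      replace (hcoef c d n * / INR (S m) * (INR (S m) * INR (S n)))
        with (INR (S n) * hcoef c d n) by (field; lra).
      replace (hcoef c d m * / INR (S n) * (INR (S m) * INR (S n)))
        with (INR (S m) * hcoef c d m) by (field; lra).
      lra.
    - apply hypF_sum; auto; lra.
    - apply hypF_sum; auto; lra.
    - apply log_series; lra.
    - apply log_series; lra. }
  unfold gfun.
  apply Rmult_le_compat_l with (r := x * y) in H; [|nra].
  replace (x * y * (hypF c d (c + d) x * (- ln (1 - y) / y)))
    with (x * hypF c d (c + d) x * - ln (1 - y)) in H by (field; lra).
  replace (x * y * (hypF c d (c + d) y * (- ln (1 - x) / x)))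
    with (y * hypF c d (c + d) y * - ln (1 - x)) in H by (field; lra).
  exact H.
Qed.

(* The probability t/(1+t) of odds t: x = from_odds t and y = from_odds s. *)
Definition from_odds (t : R) : R := t / (1 + t).

Lemma from_odds_range (t : R) : 0 < t -> 0 < from_odds t < 1.
Proof.
  intros Ht. unfold from_odds. split; [apply Rdiv_lt_0_compat; lra|].
  apply Rmult_lt_reg_r with (1 + t); [lra|]. field_simplify; lra.
Qed.

Lemma one_minus_from_odds (t : R) : 0 <= t -> 1 - from_odds t = / (1 + t).
Proof. intros Ht. unfold from_odds. field. lra. Qed.

Lemma from_odds_le (s t : R) : 0 <= s <= t -> from_odds s <= from_odds t.
Proof.
  intros Hst. unfold from_odds, Rdiv.
  apply Rmult_le_reg_r with ((1 + s) * (1 + t)); [nra|].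
  replace (s * / (1 + s) * ((1 + s) * (1 + t))) with (s * (1 + t)) by (field; lra).
  replace (t * / (1 + t) * ((1 + s) * (1 + t))) with (t * (1 + s)) by (field; lra).
  nra.
Qed.

Lemma from_odds_odds (x : R) : x < 1 -> from_odds (x / (1 - x)) = x.
Proof. intros Hx. unfold from_odds. field. lra. Qed.

Lemma Rpower_le_base_le1 (u p q : R) : 0 < u <= 1 -> p <= q -> Rpower u q <= Rpower u p.
Proof.
  intros Hu Hpq. unfold Rpower.
  assert (Hln : ln u <= 0) by (rewrite <- ln_1; apply ln_le; lra).
  destruct (Rle_lt_or_eq_dec (q * ln u) (p * ln u)) as [Hlt|Heq]; [nra| |].
  - left. now apply exp_increasing.
  - rewrite Heq. lra.
Qed.

Lemma Rpower_root (t p : R) : 0 < t -> p <> 0 -> Rpower (Rpower t (1 / p)) p = t.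
Proof.
  intros Ht Hp. rewrite Rpower_mult. replace (1 / p * p) with 1 by (field; exact Hp).
  now apply Rpower_1.
Qed.

(* 1 + s^b <= (1+s)^b for s >= 1 and b >= 1, hence the logarithmic bound. *)
Lemma ln_one_plus_Rpower (s b : R) : 1 <= s -> 1 <= b ->
  ln (1 + Rpower s b) <= b * ln (1 + s).
Proof.
  intros Hs Hb.
  replace (b * ln (1 + s)) with (ln (Rpower (1 + s) b)) by (unfold Rpower; apply ln_exp).
  apply ln_le; [pose proof (exp_pos (b * ln s)); unfold Rpower; lra|].
  replace b with (1 + (b - 1)) by ring. rewrite !Rpower_plus, !Rpower_1 by lra.
  assert (H1 : 1 <= Rpower s (b - 1)).
  { rewrite <- (Rpower_O s) at 1 by lra. apply Rle_Rpower; lra. }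
  assert (H2 : Rpower s (b - 1) <= Rpower (1 + s) (b - 1)) by (apply Rle_Rpower_l; lra).
  assert (0 <= (1 + s) * (Rpower (1 + s) (b - 1) - Rpower s (b - 1))) by (apply Rmult_le_pos; lra).
  nra.
Qed.

Lemma phi_ge_self (a b z : R) : 0 < a <= 1 -> 1 <= b -> 0 < z -> z <= phi a b z.
Proof.
  intros Ha Hb Hz. unfold phi. rewrite <- (Rpower_1 z) at 1 by lra.
  destruct (Rle_lt_dec z 1) as [Hz1|Hz1].
  - eapply Rle_trans; [|apply Rmax_l]. apply Rpower_le_base_le1; lra.
  - eapply Rle_trans; [|apply Rmax_r]. apply Rle_Rpower; lra.
Qed.

Lemma phi_pos (a b z : R) : 0 < phi a b z.
Proof. unfold phi, Rpower. eapply Rlt_le_trans; [apply exp_pos|apply Rmax_l]. Qed.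

Lemma phiinv_ge1 (a b t : R) : 0 < a <= b -> 1 <= t -> phiinv a b t = Rpower t (1 / b).
Proof.
  intros Hab Ht. unfold phiinv. apply Rmin_right, Rle_Rpower; [lra|].
  apply Rmult_le_compat_l; [lra|]. apply Rinv_le_contravar; lra.
Qed.

Lemma phiinv_le1 (a b t : R) : 0 < a <= b -> 0 < t <= 1 -> phiinv a b t = Rpower t (1 / a).
Proof.
  intros Hab Ht. unfold phiinv. apply Rmin_left, Rpower_le_base_le1; [lra|].
  apply Rmult_le_compat_l; [lra|]. apply Rinv_le_contravar; lra.
Qed.

(* Case of large odds: if t = s^b with s >= 1 then g(t/(1+t)) <= b g(s/(1+s)),
   by the logarithmic comparison and ln(1+t) <= b ln(1+s). *)
Lemma gfun_odds_Rpower_ge1 (c d b s : R) : 0 < c -> 0 < d -> c * d <= 1 ->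
  1 <= b -> 1 <= s ->
  gfun c d (from_odds (Rpower s b)) <= b * gfun c d (from_odds s).
Proof.
  intros Hc Hd Hcd Hb Hs. set (t := Rpower s b).
  assert (Hst : s <= t) by (unfold t; rewrite <- (Rpower_1 s) at 1 by lra; apply Rle_Rpower; lra).
  pose proof (from_odds_range s ltac:(lra)) as Hy.
  pose proof (from_odds_range t ltac:(lra)) as Hx.
  assert (Hratio := gfun_log_ratio c d (from_odds t) (from_odds s) Hc Hd Hcd
                      (conj (proj1 Hy) (from_odds_le s t ltac:(lra))) (proj2 Hx)).
  rewrite !one_minus_from_odds, !ln_Rinv, !Ropp_involutive in Hratio by lra.
  assert (Hln : ln (1 + t) <= b * ln (1 + s)) by (apply ln_one_plus_Rpower; lra).
  assert (Hls : 0 < ln (1 + s)) by (rewrite <- ln_1; apply ln_increasing; lra).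
  pose proof (gfun_pos c d (from_odds s) Hc Hd Hcd Hy).
  apply Rmult_le_reg_r with (ln (1 + s)); [exact Hls|]. nra.
Qed.

(* With theta = F(y)/(1+s) in (0,1], the geometric
   comparison gives g(x) <= t theta <= t theta^a = (s theta)^a = g(y)^a. *)
Lemma gfun_odds_Rpower_le1 (c d a s : R) : 0 < c -> 0 < d -> c * d <= 1 ->
  0 < a <= 1 -> 0 < s <= 1 ->
  gfun c d (from_odds (Rpower s a)) <= Rpower (gfun c d (from_odds s)) a.
Proof.
  intros Hc Hd Hcd Ha Hs. set (t := Rpower s a).
  assert (Hst : s <= t) by (unfold t; rewrite <- (Rpower_1 s) at 1 by lra;
                            apply Rpower_le_base_le1; lra).
  pose proof (from_odds_range s ltac:(lra)) as Hy.
  pose proof (from_odds_range t ltac:(lra)) as Hx.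
  set (Fx := hypF c d (c + d) (from_odds t)). set (Fy := hypF c d (c + d) (from_odds s)).
  assert (Hgeom := hypF_geom_ratio c d (from_odds t) (from_odds s) Hc Hd Hcd
                     (conj (proj1 Hy) (from_odds_le s t ltac:(lra))) (proj2 Hx)).
  fold Fx Fy in Hgeom. rewrite !one_minus_from_odds in Hgeom by lra.
  pose proof (hypF_bounds c d (from_odds s) Hc Hd Hcd Hy) as HFy. fold Fy in HFy.
  rewrite one_minus_from_odds, Rinv_inv in HFy by lra.
  set (theta := Fy / (1 + s)).
  assert (Htheta : 0 < theta <= 1).
  { unfold theta. split; [apply Rdiv_lt_0_compat; lra|].
    apply Rmult_le_reg_r with (1 + s); [lra|]. field_simplify; lra. }
  assert (Hgx : gfun c d (from_odds t) <= t * theta).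
  { unfold gfun. fold Fx. unfold from_odds, theta.
    replace (t / (1 + t) * Fx) with (t * (Fx * / (1 + t))) by (field; lra).
    replace (t * (Fy / (1 + s))) with (t * (Fy * / (1 + s))) by (field; lra).
    apply Rmult_le_compat_l; lra. }
  assert (Hgy : gfun c d (from_odds s) = s * theta).
  { unfold gfun. fold Fy. unfold from_odds, theta. field. lra. }
  assert (Htheta_a : theta <= Rpower theta a).
  { rewrite <- (Rpower_1 theta) at 1 by lra. apply Rpower_le_base_le1; lra. }
  rewrite Hgy, <- Rpower_mult_distr by lra. fold t.
  eapply Rle_trans; [exact Hgx|]. apply Rmult_le_compat_l; lra.
Qed.

Theorem mainTheorem12 (a b c d x : R) :
  0 < a -> a < 1 -> 1 < b ->
  0 < c -> 0 < d -> c * d <= 1 ->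
  0 < x < 1 ->
  gfun c d x <=
  b * phi a b (gfun c d (phiinv a b (x / (1 - x)) / (1 + phiinv a b (x / (1 - x))))).
Proof.
  intros Ha Ha1 Hb Hc Hd Hcd Hx.
  set (t := x / (1 - x)).
  assert (Ht : 0 < t) by (unfold t; apply Rdiv_lt_0_compat; lra).
  change (phiinv a b t / (1 + phiinv a b t)) with (from_odds (phiinv a b t)).
  rewrite <- (from_odds_odds x) by lra. fold t.
  destruct (Rle_lt_dec 1 t) as [Ht1|Ht1].
  - (* t = s^b with s = t^(1/b) >= 1 *)
    rewrite phiinv_ge1 by lra. set (s := Rpower t (1 / b)).
    assert (Hs : 1 <= s).
    { unfold s. rewrite <- (Rpower_O t) at 1 by lra. apply Rle_Rpower; [lra|].
      apply Rlt_le, Rdiv_lt_0_compat; lra. }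
    replace t with (Rpower s b) at 1 by (apply Rpower_root; lra).
    eapply Rle_trans; [apply gfun_odds_Rpower_ge1; auto; lra|].
    apply Rmult_le_compat_l; [lra|].
    apply phi_ge_self; [lra|lra|]. apply gfun_pos; auto. apply from_odds_range; lra.
  - (* t = s^a with s = t^(1/a) in (0,1] *)
    rewrite phiinv_le1 by lra. set (s := Rpower t (1 / a)).
    assert (Hs : 0 < s <= 1).
    { split; [apply exp_pos|]. unfold s. rewrite <- (Rpower_O t) at 2 by lra.
      apply Rpower_le_base_le1; [lra|]. apply Rlt_le, Rdiv_lt_0_compat; lra. }
    replace t with (Rpower s a) at 1 by (apply Rpower_root; lra).
    eapply Rle_trans; [apply gfun_odds_Rpower_le1; auto; lra|].
    pose proof (phi_pos a b (gfun c d (from_odds s))).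
    assert (Rpower (gfun c d (from_odds s)) a <= phi a b (gfun c d (from_odds s)))
      by apply Rmax_l.
    nra.
Qed.
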